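(* Let $R$ be a left arithmetical ring with Jacobson radical $J$, let $M$ be a finitely generated projective left $R$-module, and let $I$ be an invertible ideal of $R$ with $I\subseteq J$ such that every finite colength submodule of $M/IM$ is projective as a left $R/I$-module. Let $X$ be a submodule of $M$, and for each integer $j\ge 0$ put $$Y_j=\frac{(M\cap I^{-j}X)+IM}{IM}\subseteq M/IM.$$ Then for each $j\ge 0$ the $j$-th piece of the $I$-adic associated graded module of $M/X$ satisfies $$\frac{I^j(M/X)}{I^{j+1}(M/X)}\cong I^j\otimes_R \frac{M/IM}{Y_j}$$ as left $R$-modules.
   Context: A ring $R$ is left arithmetical if every simple left $R$-module is finite and finitely presented, and for each positive integer $n$ there are only finitely many isomorphism classes of simple left $R$-modules with $n$ elements. An ideal $I$ of $R$ is invertible if $I\otimes_R-$ is an auto-equivalence of the category of left $R$-modules. Let $\tilde R\supseteq R$ be the overring obtained by inverting all invertible ideals of $R$ and $\tilde M=\tilde R\otimes_R M\supseteq M$; for an $R$-submodule $X\subseteq M$ and $j\ge0$, $I^{-j}X\subseteq\tilde M$ denotes the product of the inverse ideal $I^{-j}$ with $X$ inside $\tilde M$ (equivalently, $M\cap I^{-j}X=\{m\in M: I^jm\subseteq X\}$). A submodule has finite colength if the quotient has finite length. *)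

From HB Require Import structures.
From mathcomp Require Import all_boot all_order all_algebra.
Set Implicit Arguments. Unset Strict Implicit. Unset Printing Implicit Defensive.
Import GRing.Theory.
Local Open Scope ring_scope.

Section ModuleTheory.
Variable R : pzRingType.

Definition submod (M : lmodType R) (S : M -> Prop) : Prop :=
  S 0 /\ forall (a : R) (u v : M), S u -> S v -> S (a *: u + v).

Definition subset_of (T : Type) (S S' : T -> Prop) := forall x, S x -> S' x.

Definition sum_sub (M : lmodType R) (S T : M -> Prop) : M -> Prop :=
  fun m => exists u v, S u /\ T v /\ m = u + v.

Definition left_ideal (L : R -> Prop) : Prop := @submod R^o L.
Definition ideal (I : R -> Prop) : Prop :=
  left_ideal I /\ forall a r : R, I a -> I (a * r).

(* I X : the submodule generated by the a *: x, a in I, x in X *)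
Definition prodsub (M : lmodType R) (I : R -> Prop) (X : M -> Prop) : M -> Prop :=
  fun m => forall S : M -> Prop, submod S ->
    (forall a x, I a -> X x -> S (a *: x)) -> S m.

Fixpoint ipow (I : R -> Prop) (j : nat) : R -> Prop :=
  match j with
  | 0 => fun _ => True
  | j'.+1 => @prodsub R^o I (ipow I j')
  end.

Definition powM (M : lmodType R) (I : R -> Prop) (j : nat) : M -> Prop :=
  prodsub (ipow I j) (fun _ => True).

(* M ∩ I^{-j} X = { m in M : I^j m ⊆ X } *)
Definition colon_pow (M : lmodType R) (I : R -> Prop) (j : nat) (X : M -> Prop)
  : M -> Prop := fun m => forall a, ipow I j a -> X (a *: m).

Definition max_left_ideal (L : R -> Prop) : Prop :=
  left_ideal L /\ ~ L 1 /\
  forall L', left_ideal L' -> subset_of L L' -> (forall x, L' x <-> L x) \/ L' 1.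
Definition jacobson : R -> Prop := fun a => forall L, max_left_ideal L -> L a.

Definition lin (M N : lmodType R) (f : M -> N) : Prop :=
  forall (r : R) (x y : M), f (r *: x + y) = r *: f x + f y.

(* linear map defined on the subquotient A/B of M (values outside A irrelevant) *)
Definition lin_sq (M N : lmodType R) (A B : M -> Prop) (f : M -> N) : Prop :=
  (forall (r : R) (x y : M), A x -> A y -> f (r *: x + y) = r *: f x + f y) /\
  (forall x, B x -> f x = 0).

Definition mod_iso (M N : lmodType R) : Prop :=
  exists f : M -> N, lin f /\ bijective f.

(* --- tensor products, via the universal property ---
   Given a two-sided ideal K (an R-R-bimodule), a module N, a submodule C of N,
   a module Q and submodules B ⊆ A of Q, [is_tensor K C A B beta] says that
   beta induces an isomorphism of left R-modules  K ⊗_R (N/C) ≅ A/B,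
   i.e. beta : K × N/C -> A/B is R-balanced, left R-linear in the first
   variable, and universal among such maps. *)
Definition balanced (K : R -> Prop) (N Q : lmodType R) (C : N -> Prop)
  (B : Q -> Prop) (beta : R -> N -> Q) : Prop :=
  (forall a a' n, K a -> K a' -> B (beta (a + a') n - (beta a n + beta a' n))) /\
  (forall a n n', K a -> B (beta a (n + n') - (beta a n + beta a n'))) /\
  (forall a c, K a -> C c -> B (beta a c)) /\
  (forall a r n, K a -> B (beta (a * r) n - beta a (r *: n))) /\
  (forall a r n, K a -> B (beta (r * a) n - r *: beta a n)).

Definition is_tensor (K : R -> Prop) (N Q : lmodType R) (C : N -> Prop)
  (A B : Q -> Prop) (beta : R -> N -> Q) : Prop :=
  submod C /\ submod A /\ submod B /\ subset_of B A /\
  (forall a n, K a -> A (beta a n)) /\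
  balanced K C B beta /\
  forall (Q' : lmodType R) (gamma : R -> N -> Q'),
    balanced K C (fun x => x = 0) gamma ->
    exists f : Q -> Q', lin_sq A B f /\
      (forall a n, K a -> f (beta a n) = gamma a n) /\
      forall g : Q -> Q', lin_sq A B g ->
        (forall a n, K a -> g (beta a n) = gamma a n) ->
        forall x, A x -> g x = f x.

Definition is_tensor_full (K : R -> Prop) (N Q : lmodType R) (beta : R -> N -> Q) :=
  @is_tensor K N Q (fun x => x = 0) (fun _ => True) (fun x => x = 0) beta.

(* An ideal I is invertible if I ⊗_R - is an auto-equivalence of R-Mod:
   essentially surjective and fully faithful. *)
Definition invertible_ideal (I : R -> Prop) : Prop :=
  ideal I /\
  (forall Q : lmodType R, exists (N : lmodType R) (beta : R -> N -> Q),
      is_tensor_full I beta) /\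
  (forall (N N' Q Q' : lmodType R) (beta : R -> N -> Q) (beta' : R -> N' -> Q'),
      is_tensor_full I beta -> is_tensor_full I beta' ->
      forall psi : Q -> Q', lin psi ->
        (exists phi : N -> N', lin phi /\
           forall a n, I a -> psi (beta a n) = beta' a (phi n)) /\
        (forall phi phi' : N -> N', lin phi -> lin phi' ->
           (forall a n, I a -> psi (beta a n) = beta' a (phi n)) ->
           (forall a n, I a -> psi (beta a n) = beta' a (phi' n)) ->
           forall n, phi n = phi' n)).

Definition span (M : lmodType R) (G : M -> Prop) : M -> Prop :=
  prodsub (fun _ => True) G.

Definition fin_gen_sub (M : lmodType R) (S : M -> Prop) : Prop :=
  exists s : seq M, (forall x, x \in s -> S x) /\
    forall m, S m <-> span (fun x => x \in s) m.

Definition fin_gen (M : lmodType R) : Prop := fin_gen_sub (fun _ : M => True).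

Definition fin_pres (M : lmodType R) : Prop :=
  exists (k : nat) (v : 'I_k -> M),
    (forall m, span (fun x => exists i, x = v i) m) /\
    fin_gen_sub (fun c : 'rV[R]_k => \sum_(i < k) c 0 i *: v i = 0).

Definition mod_finite (M : lmodType R) : Prop := exists s : seq M, forall x, x \in s.

Definition has_card (M : lmodType R) (n : nat) : Prop :=
  exists s : seq M, uniq s /\ size s = n /\ forall x, x \in s.

Definition simple_mod (M : lmodType R) : Prop :=
  (exists x : M, x != 0) /\
  forall S : M -> Prop, submod S -> (forall x, S x -> x = 0) \/ (forall x, S x).

Definition left_arithmetical : Prop :=
  (forall N : lmodType R, simple_mod N -> mod_finite N /\ fin_pres N) /\
  (forall n : nat, exists (k : nat) (F : nat -> lmodType R),
     forall N : lmodType R, simple_mod N -> has_card N n ->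
       exists i, (i < k)%N /\ mod_iso N (F i)).

Definition projective (M : lmodType R) : Prop :=
  forall (P Q : lmodType R) (g : P -> Q) (h : M -> Q),
    lin g -> (forall q : Q, exists p : P, g p = q) -> lin h ->
    exists k : M -> P, lin k /\ forall m, g (k m) = h m.

Definition finite_colength (M : lmodType R) (Z : M -> Prop) : Prop :=
  exists (k : nat) (S : nat -> M -> Prop),
    (forall x, S 0%N x <-> Z x) /\ (forall x, S k x) /\
    (forall i, submod (S i)) /\
    (forall i, (i < k)%N ->
       subset_of (S i) (S i.+1) /\ (exists x, S i.+1 x /\ ~ S i x) /\
       forall T, submod T -> subset_of (S i) T -> subset_of T (S i.+1) ->
         (forall x, T x <-> S i x) \/ (forall x, T x <-> S i.+1 x)).

(* the subquotient Z/W of M is projective as a left R/I-module, where the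
   R/I-modules are the R-modules annihilated by I *)
Definition annihilated (I : R -> Prop) (P : lmodType R) : Prop :=
  forall a (x : P), I a -> a *: x = 0.

Definition projective_sq_over (I : R -> Prop) (M : lmodType R) (Z W : M -> Prop) : Prop :=
  forall (P Q : lmodType R) (g : P -> Q) (h : M -> Q),
    annihilated I P -> annihilated I Q ->
    lin g -> (forall q : Q, exists p : P, g p = q) -> lin_sq Z W h ->
    exists k : M -> P, lin_sq Z W k /\ forall m, Z m -> g (k m) = h m.

(* the submodules of M/IM are the Z/IM with IM ⊆ Z ⊆ M *)
Definition fin_colength_subs_projective (I : R -> Prop) (M : lmodType R) : Prop :=
  forall Z : M -> Prop, submod Z -> subset_of (@powM M I 1%N) Z ->
    finite_colength Z -> projective_sq_over I Z (@powM M I 1%N).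

End ModuleTheory.

From HB Require Import structures.
From mathcomp Require Import all_boot all_order all_algebra.
From mathcomp Require Import generic_quotient ring_quotient.
From mathcomp Require Import boolp classical_sets.
Set Implicit Arguments. Unset Strict Implicit. Unset Printing Implicit Defensive.
Import GRing.Theory.
Local Open Scope ring_scope.
Local Open Scope quotient_scope.

(* Write K = I^j and Y = IM, so that I^(j+1) M = KY.  The invertible ideal K
   has a dual basis: elements P_k of K and q_k of K^-1 with sum_k P_k q_k = 1
   and K q_k ⊆ R.  The map (a, m) |-> a m from K × M to (KM + X)/(KY + X) is
   balanced and kills K × C, where C = (M ∩ K^-1 X) + Y.  It is universal: a
   balanced gamma vanishing on K × C induces
     f (sum_i t_i m_i + x) = sum_i gamma(t_i, m_i),
   which is well defined because, when sum_i t_i m_i lies in X,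
     sum_i gamma(t_i, m_i) = sum_k gamma(P_k, sum_i q_k t_i m_i)
   and every sum_i q_k t_i m_i lies in M ∩ K^-1 X.
   A dual basis of I comes from an isomorphism I ⊗ N ≅ R: write
   1 = sum_k beta(p_k, n_k); by full faithfulness of I ⊗ -, right
   multiplication by t ∈ I lifts to a unique phi_t on N with
   beta(a, n) t = a phi_t(n), and q_k t := phi_t(n_k). *)

Notation "A ** B" := (@prodsub _ _^o A B) (at level 40, left associativity).

Section Closure.
Variables (R : pzRingType) (M : lmodType R) (S : M -> Prop).
Hypothesis HS : submod S.

Lemma submod0 : S 0. Proof. by case: HS. Qed.

Lemma submodD x y : S x -> S y -> S (x + y).
Proof. by move=> Sx Sy; have := HS.2 1 _ _ Sx Sy; rewrite scale1r. Qed.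

Lemma submodZ r x : S x -> S (r *: x).
Proof. by move=> Sx; have := HS.2 r _ _ Sx submod0; rewrite addr0. Qed.

Lemma submodN x : S x -> S (- x).
Proof. by move=> Sx; rewrite -scaleN1r; apply: submodZ. Qed.

Lemma submodB x y : S x -> S y -> S (x - y).
Proof. by move=> Sx Sy; apply/submodD/submodN. Qed.

Lemma submod_sum (I : Type) (r : seq I) (P : pred I) (F : I -> M) :
  (forall i, P i -> S (F i)) -> S (\sum_(i <- r | P i) F i).
Proof. by move=> SF; apply: (big_ind S); [exact: submod0 | exact: submodD |]. Qed.

End Closure.

Section Operations.
Variable R : pzRingType.
Implicit Types (M : lmodType R) (K : R -> Prop) (a r : R).

Lemma submod_eq0 M : submod (fun x : M => x = 0).
Proof. by split=> // a u v -> ->; rewrite scaler0 addr0. Qed.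

Lemma sum_sub_submod M (S T : M -> Prop) :
  submod S -> submod T -> submod (sum_sub S T).
Proof.
move=> HS HT; split.
  by exists 0, 0; split; [exact: submod0 | split; [exact: submod0 | rewrite addr0]].
move=> r _ _ [u [v [Su [Tv ->]]]] [u' [v' [Su' [Tv' ->]]]].
exists (r *: u + u'), (r *: v + v'); split; first exact: HS.2.
by split; [exact: HT.2 | rewrite scalerDr addrACA].
Qed.

Lemma sum_subl M (S T : M -> Prop) x :
  submod T -> S x -> sum_sub S T x.
Proof. by move=> HT Sx; exists x, 0; split; [|split; [exact: submod0 | rewrite addr0]]. Qed.

Lemma sum_subr M (S T : M -> Prop) x :
  submod S -> T x -> sum_sub S T x.
Proof. by move=> HS Tx; exists 0, x; split; [exact: submod0 | split; [|rewrite add0r]]. Qed.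

(* [colon (ipow I j) X] is [colon_pow I j X], i.e. M ∩ I^-j X. *)
Definition colon M K (X : M -> Prop) : M -> Prop :=
  fun m => forall a, K a -> X (a *: m).

Lemma colon_submod M K (X : M -> Prop) :
  ideal K -> submod X -> submod (colon K X).
Proof.
move=> hK hX; split=> [a _|r u v Xu Xv a Ka]; first by rewrite scaler0; exact: submod0.
rewrite scalerDr scalerA; exact: (submodD hX (Xu _ (hK.2 _ r Ka)) (Xv _ Ka)).
Qed.

Lemma prodsub_submod M K (Y : M -> Prop) : submod (prodsub K Y).
Proof.
split=> [S [] //|a u v Yu Yv S HS gen].
by apply: HS.2; [apply: Yu | apply: Yv].
Qed.

Lemma prodsubZ M K (Y : M -> Prop) a x :
  K a -> Y x -> prodsub K Y (a *: x).
Proof. by move=> Ka Yx S _; apply. Qed.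

Lemma prodsub_ind M K (Y S : M -> Prop) : submod S ->
  (forall a x, K a -> Y x -> S (a *: x)) -> subset_of (prodsub K Y) S.
Proof. by move=> HS gen x; apply. Qed.

Lemma prodsubS M K K' (Y Y' : M -> Prop) :
  subset_of K K' -> subset_of Y Y' -> subset_of (prodsub K Y) (prodsub K' Y').
Proof.
move=> KK' YY'; apply: prodsub_ind; first exact: prodsub_submod.
by move=> a x Ka Yx; apply: prodsubZ; [apply: KK' | apply: YY'].
Qed.

Lemma prodsubA M (A B : R -> Prop) (Y : M -> Prop) :
  (forall a r, A a -> A (a * r)) -> prodsub A (prodsub B Y) = @prodsub _ M (A ** B) Y.
Proof.
move=> Ar; have [sA sAB] := (prodsub_submod A (prodsub B Y), @prodsub_submod M (A ** B) Y).
apply/predeqP => x; split.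
  have gen : forall y, prodsub B Y y -> forall a, A a -> @prodsub _ M (A ** B) Y (a *: y).
    apply: (prodsub_ind (S := fun y => forall a, A a -> @prodsub _ M (A ** B) Y (a *: y))).
      split=> [a _|r u v Pu Pv a Aa]; first by rewrite scaler0; exact: submod0.
      by rewrite scalerDr scalerA; exact: (submodD sAB (Pu _ (Ar _ r Aa)) (Pv _ Aa)).
    move=> b z Bb Yz a Aa; rewrite scalerA; apply: prodsubZ => //.
    exact: (prodsubZ (M := R^o)).
  by move: x; apply: prodsub_ind => // a y Aa /gen; apply.
move: x; apply: prodsub_ind => // ab y ABab Yy; move: ab ABab.
apply: (@prodsub_ind R^o A B (fun ab => prodsub A (prodsub B Y) ((ab : R) *: y))).
  split=> [|r u v Pu Pv]; first by rewrite scale0r; exact: submod0.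
  by rewrite scalerDl -scalerA; apply: sA.2.
by move=> a b Aa Bb; rewrite -scalerA; apply: prodsubZ => //; exact: prodsubZ.
Qed.

Lemma prodsub_mulr K (B : R -> Prop) :
  (forall b r, B b -> B (b * r)) -> forall x r, (K ** B) x -> (K ** B) (x * r).
Proof.
move=> Br x r; move: x; apply: (prodsub_ind (S := fun x : R^o => (K ** B) (x * r))).
  split=> [|c u v Pu Pv]; first by rewrite mul0r; exact: (submod0 (prodsub_submod _ _)).
  by rewrite mulrDl -mulrA; apply: (prodsub_submod _ _).2.
by move=> a b Ka Bb; rewrite -mulrA; apply: (prodsubZ (M := R^o)) => //; exact: Br.
Qed.

Definition lincomb M K (Y : M -> Prop) (x : M) : Prop :=
  exists s : seq (R * M),
    {in s, forall p, K p.1 /\ Y p.2} /\ x = \sum_(p <- s) p.1 *: p.2.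

Lemma lincomb_submod M K (Y : M -> Prop) :
  left_ideal K -> submod (lincomb K Y).
Proof.
move=> hK; split; first by exists [::]; rewrite big_nil.
move=> r _ _ [s [hs ->]] [s' [hs' ->]].
exists ([seq (r * p.1, p.2) | p <- s] ++ s'); split.
  move=> p; rewrite mem_cat => /orP[/mapP[q qs ->]|]; last exact: hs'.
  by have [Kq Yq] := hs q qs; split=> //; exact: (submodZ hK _ Kq).
rewrite big_cat big_map scaler_sumr; congr (_ + _).
by apply: eq_bigr => p _; rewrite scalerA.
Qed.

Lemma prodsub_lincomb M K (Y : M -> Prop) :
  left_ideal K -> subset_of (prodsub K Y) (lincomb K Y).
Proof.
move=> hK; apply: prodsub_ind; first exact: lincomb_submod.
move=> a x Ka Yx; exists [:: (a, x)]; split; last by rewrite big_seq1.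
by move=> p; rewrite inE => /eqP ->.
Qed.

End Operations.

Section PropSubmodule.
Variables (R : pzRingType) (M : lmodType R) (S : M -> Prop).
Hypothesis HS : submod S.

(* Indexed by the closure proof, on which the canonical instances below depend. *)
Definition submod_pred of submod S : pred M := fun x => `[< S x >].

Lemma submod_pred_closed : subsemimod_closed (submod_pred HS).
Proof.
split; [split|] => [|x y /asboolP Sx /asboolP Sy|r x /asboolP Sx]; apply/asboolP.
- exact: submod0.
- exact: submodD.
- exact: submodZ.
Qed.

HB.instance Definition _ :=
  GRing.isSubmodClosed.Build R M (submod_pred HS) submod_pred_closed.

Definition submod_of := {x : M | submod_pred HS x}.
HB.instance Definition _ := [isSub of submod_of for @sval M (submod_pred HS)].
HB.instance Definition _ := [Choice of submod_of by <:].
HB.instance Definition _ := [SubChoice_isSubLmodule of submod_of by <:].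

Lemma val_insubd x : S x -> val (insubd 0 x : submod_of) = x.
Proof. by move=> Sx; rewrite insubdK //; apply/asboolP. Qed.

Lemma submod_ofP (u : submod_of) : S (val u).
Proof. by apply/asboolP; case: u. Qed.

Let kS := Algebra.ZmodClosed.clone _ (submod_pred HS) _.
Definition quotmod_of := Quotient.quot kS.
HB.instance Definition _ := GRing.Zmodule.on quotmod_of.
HB.instance Definition _ : EqQuotient M (Quotient.equiv kS) quotmod_of :=
  EqQuotient.on quotmod_of.

Local Notation pi := \pi_quotmod_of.

Definition quot_scale (r : R) := lift_op1 quotmod_of ( *:%R r).

Lemma pi_scale r : {morph pi : x / r *: x >-> quot_scale r x}.
Proof.
move=> x; rewrite /quot_scale -lock; apply/eqP.
by rewrite -Quotient.idealrBE -scalerBr rpredZ // Quotient.idealrBE reprK.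
Qed.
Canonical pi_scale_morph r := PiMorph1 (pi_scale r).

Lemma quot_scaleA a b v : quot_scale a (quot_scale b v) = quot_scale (a * b) v.
Proof. by rewrite -[v]reprK !piE scalerA. Qed.
Lemma quot_scale1 : left_id 1 quot_scale.
Proof. by move=> v; rewrite -[v]reprK !piE scale1r. Qed.
Lemma quot_scaleDr a : {morph quot_scale a : u v / u + v}.
Proof. by move=> u v; rewrite -[u]reprK -[v]reprK !piE scalerDr. Qed.
Lemma quot_scaleDl v : {morph quot_scale^~ v : a b / a + b}.
Proof. by move=> a b; rewrite -[v]reprK !piE scalerDl. Qed.

HB.instance Definition _ := GRing.Zmodule_isLmodule.Build R quotmod_of
  quot_scaleA quot_scale1 quot_scaleDr quot_scaleDl.

Lemma pi_lin : lin pi.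
Proof. by move=> r x y; rewrite !piE. Qed.

Lemma pi_eq0 x : pi x = 0 <-> S x.
Proof.
have e : (pi x == 0) = (x \in kS) by rewrite -[x in RHS]subr0 Quotient.idealrBE !piE.
split=> [/eqP|Sx]; first by rewrite e => /asboolP.
by apply/eqP; rewrite e; apply/asboolP.
Qed.

End PropSubmodule.

Section Balanced.
Variables (R : pzRingType) (K : R -> Prop) (N Q : lmodType R) (C : N -> Prop).
Variable gamma : R -> N -> Q.
Hypotheses (hK : left_ideal K) (hg : balanced K C (fun x => x = 0) gamma).

Lemma balancedDl a a' n : K a -> K a' -> gamma (a + a') n = gamma a n + gamma a' n.
Proof. by move=> Ka Ka'; apply/eqP; rewrite -subr_eq0; apply/eqP; exact: hg.1. Qed.

Lemma balancedDr a n n' : K a -> gamma a (n + n') = gamma a n + gamma a n'.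
Proof. by move=> Ka; apply/eqP; rewrite -subr_eq0; apply/eqP; exact: hg.2.1. Qed.

Lemma balanced_eq0 a c : K a -> C c -> gamma a c = 0.
Proof. exact: hg.2.2.1. Qed.

Lemma balancedMr a r n : K a -> gamma (a * r) n = gamma a (r *: n).
Proof. by move=> Ka; apply/eqP; rewrite -subr_eq0; apply/eqP; exact: hg.2.2.2.1. Qed.

Lemma balancedMl a r n : K a -> gamma (r * a) n = r *: gamma a n.
Proof. by move=> Ka; apply/eqP; rewrite -subr_eq0; apply/eqP; exact: hg.2.2.2.2. Qed.

Lemma balanced0l n : gamma 0 n = 0.
Proof.
apply: (addIr (gamma 0 n)); rewrite add0r -balancedDl ?addr0 //; exact: (submod0 hK).
Qed.

Lemma balanced0r a : K a -> gamma a 0 = 0.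
Proof. by move=> Ka; apply: (addIr (gamma a 0)); rewrite add0r -balancedDr ?addr0. Qed.

Lemma balancedNl a n : K a -> gamma (- a) n = - gamma a n.
Proof.
move=> Ka; apply/eqP; rewrite -addr_eq0 -balancedDl ?addNr ?balanced0l //.
exact: (submodN hK Ka).
Qed.

Lemma balanced_suml (T : Type) (r : seq T) (P : pred T) (F : T -> R) n :
  (forall i, P i -> K (F i)) ->
  gamma (\sum_(i <- r | P i) F i) n = \sum_(i <- r | P i) gamma (F i) n.
Proof.
move=> KF; elim: r => [|i r IH]; first by rewrite !big_nil balanced0l.
rewrite !big_cons; case: ifP => Pi //.
by rewrite balancedDl ?IH //; [exact: KF | exact: (submod_sum hK)].
Qed.

Lemma balanced_sumr a (T : Type) (r : seq T) (F : T -> N) : K a ->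
  gamma a (\sum_(i <- r) F i) = \sum_(i <- r) gamma a (F i).
Proof.
move=> Ka; apply: (big_morph (gamma a)); last exact: balanced0r.
by move=> x y; exact: balancedDr.
Qed.

End Balanced.

Section IdealPowers.
Variables (R : pzRingType) (I : R -> Prop).
Hypothesis hI : ideal I.

Lemma ideal_mulT : I ** (fun _ => True) = I.
Proof.
apply/predeqP => a; split; last by move=> Ia; rewrite -[a]mulr1; exact: prodsubZ.
by apply: prodsub_ind; [exact: hI.1 | move=> b x Ib _; exact: hI.2].
Qed.

Lemma ideal_Tmul : (fun _ => True) ** I = I.
Proof.
apply/predeqP => a; split; last by move=> Ia; rewrite -[a]mul1r; exact: prodsubZ.
by apply: prodsub_ind; [exact: hI.1 | move=> b x _ Ix; exact: (submodZ hI.1 _ Ix)].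
Qed.

Lemma ipow_ideal j : ideal (ipow I j).
Proof.
elim: j => [|j [_ IHr]]; first by do !split.
by split; [exact: prodsub_submod | exact: prodsub_mulr].
Qed.

Lemma ipow1 : ipow I 1 = I. Proof. exact: ideal_mulT. Qed.

Lemma ipowSr j : ipow I j.+1 = ipow I j ** I.
Proof.
elim: j => [|j IH]; first by rewrite ipow1 ideal_Tmul.
change (I ** ipow I j.+1 = ipow I j.+1 ** I).
by rewrite {1}IH prodsubA //; exact: hI.2.
Qed.

Lemma ipowS_ideal j t : ipow I j.+1 t -> I t.
Proof. by apply: (@prodsub_ind _ R^o I (ipow I j) I hI.1) => a x Ia _; exact: hI.2. Qed.

End IdealPowers.

Lemma tensor_full_pure_sums (R : pzRingType) (K : R -> Prop) (N Q : lmodType R)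
    (beta : R -> N -> Q) :
  left_ideal K -> is_tensor_full K beta ->
  forall q, exists s : seq (R * N),
    {in s, forall p, K p.1} /\ q = \sum_(p <- s) beta p.1 p.2.
Proof.
move=> hK [_ [_ [_ [_ [_ [hbal huniv]]]]]].
pose S q := exists s : seq (R * N),
  {in s, forall p, K p.1} /\ q = \sum_(p <- s) beta p.1 p.2.
have hS : submod S.
  split; first by exists [::]; rewrite big_nil.
  move=> r _ _ [s [hs ->]] [s' [hs' ->]].
  exists ([seq (r * p.1, p.2) | p <- s] ++ s'); split.
    move=> p; rewrite mem_cat => /orP[/mapP[q qs ->]|]; last exact: hs'.
    exact: (submodZ hK _ (hs q qs)).
  rewrite big_cat big_map scaler_sumr; congr (_ + _).
  by apply: eq_big_seq => p ps; rewrite (balancedMl hbal) //; exact: hs.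
have hzero : @balanced R K N (quotmod_of hS) (fun x => x = 0) (fun x => x = 0) (fun _ _ => 0).
  by do !split=> *; rewrite ?(addr0, scaler0, subrr).
have [f [_ [_ funiq]]] := huniv _ _ hzero.
have pi0 : lin_sq (fun _ => True) (fun x => x = 0) \pi_(quotmod_of hS).
  by split=> [r x y _ _|x ->]; [exact: pi_lin | apply/(pi_eq0 hS); exact: submod0].
have zero0 : lin_sq (fun _ => True) (fun x => x = 0) (fun _ : Q => 0 : quotmod_of hS).
  by split=> // r x y _ _; rewrite scaler0 addr0.
(* The projection onto Q/S and the zero map agree on pure tensors, hence on q. *)
have agree a n : K a -> \pi_(quotmod_of hS) (beta a n) = 0.
  move=> Ka; apply/(pi_eq0 hS); exists [:: (a, n)]; rewrite big_seq1; split=> // p.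
  by rewrite inE => /eqP ->.
by move=> q; apply/(pi_eq0 hS); rewrite (funiq _ pi0 agree) // -(funiq _ zero0).
Qed.

Section DualBasis.
Variable R : pzRingType.
Implicit Types (K I : R -> Prop) (f : R -> R).

(* [ka k t] plays the role of [q_k * t] for elements [q_k] of the inverse of [K]
   with [\sum_k P k * q_k = 1]; the last clause says that [K * q_k] lies in [R]. *)
Definition dual_basis K (T : eqType) (ks : seq T) (P : T -> R) (ka : T -> R -> R) :=
  [/\ {in ks, forall k, K (P k)},
      forall t, K t -> t = \sum_(k <- ks) P k * ka k t &
      {in ks, forall k a, K a -> exists rho, forall t, K t -> a * ka k t = rho * t}].

Definition rlinear_on K f := forall t t' r, K t -> K t' -> f (t * r + t') = f t * r + f t'.

Section Powers.
Variables (I : R -> Prop) (T0 : eqType) (ks0 : seq T0) (p : T0 -> R) (c : T0 -> R -> R).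
Hypotheses (hI : ideal I) (hdb : dual_basis I ks0 p c) (hc : forall k, rlinear_on I (c k)).

Lemma rlinear_ipow f j t : rlinear_on I f -> ipow I j.+1 t -> ipow I j (f t).
Proof.
move=> hf /(prodsub_lincomb hI.1) [s [hs ->]].
have hJ := (ipow_ideal I j).1; have I0 := submod0 hI.1.
have f0 : f 0 = 0.
  apply: (addIr (f 0)); rewrite add0r.
  by have := hf 0 0 1 I0 I0; rewrite mul0r add0r mulr1.
suff [] : I (\sum_(q <- s) q.1 * q.2) /\ ipow I j (f (\sum_(q <- s) q.1 * q.2)) by [].
elim: s hs => [|q s IH] hs; first by rewrite big_nil f0; split; [|exact: (submod0 hJ)].
have [Iq Jq] := hs q (mem_head _ _).
have [Is Js] := IH (fun x xs => hs x (predU1r _ _ xs)).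
rewrite big_cons; split; first exact: (submodD hI.1 (hI.2 _ _ Iq) Is).
by rewrite hf //; exact: (submodD hJ (submodZ hJ _ Jq) Js).
Qed.

Lemma dual_basis_ipow j : exists (T : eqType) (ks : seq T) P ka, dual_basis (ipow I j) ks P ka.
Proof.
have [hp hdec hrho] := hdb.
elim: j => [|j [T [ks [P [ka [hP hd hr]]]]]].
  exists unit, [:: tt], (fun _ => 1), (fun _ t => t); split=> //.
    by move=> t _; rewrite big_seq1 mul1r.
  by move=> k _ a _; exists a.
(* The inverse elements for I^(j+1) are the products of those for I^j and for I. *)
exists (T0 * T)%type, [seq (k, l) | k <- ks0, l <- ks].
exists (fun x => p x.1 * P x.2), (fun x t => ka x.2 (c x.1 t)); split.
- move=> _ /allpairsP[[k l] [/= k0 l0 ->]].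
  exact: (prodsubZ (M := R^o) (hp k k0) (hP l l0)).
- move=> t Jt; rewrite big_allpairs {1}(hdec t (ipowS_ideal hI Jt)).
  apply: eq_bigr => k _; rewrite {1}(hd _ (rlinear_ipow (hc k) Jt)) mulr_sumr.
  by apply: eq_bigr => l _; rewrite mulrA.
move=> _ /allpairsP[[k l] [/= k0 l0 ->]].
apply: (@prodsub_ind _ R^o I (ipow I j)
  (fun a => exists rho, forall t, ipow I j.+1 t -> a * ka l (c k t) = rho * t)).
  split; first by exists 0 => t _; rewrite !mul0r.
  move=> r u v [ru hu] [rv hv]; exists (r * ru + rv) => t Jt.
  by rewrite -[r *: u]/(r * u) mulrDl -mulrA hu // hv // mulrDl mulrA.
move=> u v Iu Jv; have [r1 h1] := hr l l0 v Jv.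
have [r2 h2] := hrho k k0 _ (hI.2 _ r1 Iu).
exists r2 => t Jt; rewrite -[u *: v]/(u * v) -mulrA h1; last exact: (rlinear_ipow (hc k) Jt).
by rewrite mulrA h2 //; exact: (ipowS_ideal hI Jt).
Qed.

End Powers.

Section IdealModule.
Variables (I : R -> Prop) (hI : ideal I).
Local Notation Imod := (submod_of hI.1).
Let embed (x : R) : Imod := insubd (0 : Imod) x.

Lemma ideal_tensor_regular :
  is_tensor_full I (fun (a : R) (r : R^o) => embed (a * (r : R))).
Proof.
have Ir a r : I a -> I (a * r) := hI.2 a r.
have E a r : I a -> val (embed (a * r)) = a * r by move=> Ia; exact/val_insubd/Ir.
split; first exact: submod_eq0.
split; first by split.
split; first exact: submod_eq0.
do 2!split=> //; split.
  split=> [a a' n Ia Ia'|]; first apply: val_inj.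
    rewrite raddfB raddfD /= (E _ _ (submodD hI.1 Ia Ia')) !E //.
    by rewrite mulrDl addrACA !subrr addr0.
  split=> [a n n' Ia|].
    by apply: val_inj; rewrite raddfB raddfD /= !E // mulrDr addrACA !subrr addr0.
  split=> [a c Ia ->|]; first by apply: val_inj; rewrite /= E // mulr0.
  split=> [a r n Ia|a r n Ia]; apply: val_inj.
    by rewrite raddfB /= (E _ _ (Ir _ r Ia)) E // -mulrA -[r *: n]/(r * n) subrr.
  rewrite raddfB linearZ /= (E _ _ (submodZ hI.1 r Ia)) E // -mulrA scalerN.
  by rewrite -[r *: (a * n : R^o)]/(r * (a * n)) subrr.
move=> Q gamma hg.
have Ix (u : Imod) : I (val u) by exact: submod_ofP.
exists (fun x : Imod => gamma (val x) 1); split.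
  split=> [r x y _ _|x ->]; last exact: balanced0l hI.1 hg 1.
  rewrite raddfD /= -[r *: sval x]/(r * sval x).
  by rewrite (balancedDl hg _ (submodZ hI.1 r (Ix x)) (Ix y)) (balancedMl hg r 1 (Ix x)).
split=> [a n Ia|g [glin g0] gbeta x _].
  by rewrite /= E // (balancedMr hg) //; congr (gamma a _); exact: mulr1.
have ex : embed (val x * 1) = x by apply: val_inj; rewrite E ?mulr1.
by rewrite -{1}ex gbeta.
Qed.

Definition mulr_lift (N : lmodType R) (beta : R -> N -> R) (t : R) (phi : N -> R^o) :=
  lin phi /\ forall a m, I a -> beta a m * t = a * phi m.

Section Lifts.
Variables (N : lmodType R) (beta : R -> N -> R^o).
Hypotheses (hinv : invertible_ideal I) (hb : is_tensor_full I beta).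

Let right_mul (t : R) (x : R^o) : Imod := embed (x * t).

Lemma right_mul_lin t : I t -> lin (right_mul t).
Proof.
move=> It r x y; have Et z : val (embed (z * t)) = z * t.
  exact: val_insubd (submodZ hI.1 z It).
by apply: val_inj; rewrite raddfD /= !Et mulrDl -mulrA.
Qed.

Let fully_faithful t (It : I t) :=
  hinv.2.2 N R^o R^o Imod beta _ hb ideal_tensor_regular _ (right_mul_lin It).

Lemma right_mul_embed t a m phi : I t -> I a ->
  (right_mul t (beta a m) = embed (a * phi m)) <-> (beta a m * t = a * phi m).
Proof.
move=> It Ia; rewrite /right_mul; split=> [/(congr1 val)|->] //.
by rewrite !val_insubd //; first [exact: (submodZ hI.1 _ It) | exact: hI.2].
Qed.

Lemma mulr_lift_exists t : I t -> exists phi, mulr_lift beta t phi.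
Proof.
move=> It; have [[phi [lphi hphi]] _] := fully_faithful It.
by exists phi; split=> // a m Ia; apply/(right_mul_embed _ _ It Ia); exact: hphi.
Qed.

Lemma mulr_lift_unique t phi phi' : I t ->
  mulr_lift beta t phi -> mulr_lift beta t phi' -> phi =1 phi'.
Proof.
move=> It [lphi hphi] [lphi' hphi']; apply: (fully_faithful It).2 => // a m Ia.
  by apply/(right_mul_embed _ _ It Ia); exact: hphi.
by apply/(right_mul_embed _ _ It Ia); exact: hphi'.
Qed.

End Lifts.

Lemma invertible_dual_basis : invertible_ideal I ->
  exists (T : eqType) (ks : seq T) P c, dual_basis I ks P c /\ forall k, rlinear_on I (c k).
Proof.
move=> hinv; have [N [beta hb]] := hinv.2.1 R^o.
have lift t : exists phi : N -> R^o, I t -> mulr_lift beta t phi.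
  have [It|nIt] := pselect (I t); last by exists (fun _ => 0).
  by have [phi hphi] := mulr_lift_exists hinv hb It; exists phi.
have [Phi hPhi] := choice lift.
have [s [hs e1]] := tensor_full_pure_sums hI.1 hb 1.
exists (R * N)%type, s, fst, (fun q t => Phi t q.2); split; first split.
- by move=> q /hs.
- move=> t It; rewrite -[t in LHS]mul1r e1 mulr_suml.
  by apply: eq_big_seq => q qs; apply: (hPhi t It).2; exact: hs.
- by move=> q _ a Ia; exists (beta a q.2) => t It; rewrite (hPhi t It).2.
move=> q t t' r It It'.
have Itt : I (t * r + t') by exact: (submodD hI.1 (hI.2 _ _ It) It').
suff lift' : mulr_lift beta (t * r + t') (fun m => Phi t m * r + Phi t' m).
  exact: (mulr_lift_unique hinv hb Itt (hPhi _ Itt) lift').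
split.
  move=> r' x y; rewrite (hPhi t It).1 (hPhi t' It').1.
  by rewrite -![_ *: _]/(_ * _) mulrDl addrACA -mulrA -mulrDr.
move=> a m Ia; rewrite mulrDr mulrA (hPhi t It).2 // (hPhi t' It').2 //.
by rewrite -mulrA -mulrDr.
Qed.

End IdealModule.

Lemma ipow_dual_basis I j : invertible_ideal I ->
  exists (T : eqType) (ks : seq T) P ka, dual_basis (ipow I j) ks P ka.
Proof.
move=> hinv; have [T [ks [P [c [hdb hc]]]]] := invertible_dual_basis hinv.1 hinv.
exact: dual_basis_ipow hinv.1 hdb hc j.
Qed.

End DualBasis.

Section ScaleTensor.
Variables (R : pzRingType) (K : R -> Prop) (T : eqType) (ks : seq T).
Variables (P : T -> R) (ka : T -> R -> R) (M : lmodType R) (X Y : M -> Prop).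
Hypotheses (hK : ideal K) (hdb : dual_basis K ks P ka) (hX : submod X) (hY : submod Y).

Local Notation C := (sum_sub (colon K X) Y).
Local Notation A := (sum_sub (prodsub K (fun _ => True)) X).
Local Notation B := (sum_sub (prodsub K Y) X).

Let hA : submod A := sum_sub_submod (prodsub_submod _ _) hX.
Let hB : submod B := sum_sub_submod (prodsub_submod _ _) hX.

Lemma scale_balanced : balanced K C B (fun a n => a *: n).
Proof.
have B0 := submod0 hB.
split=> [a a' n _ _|]; first by rewrite scalerDl subrr.
split=> [a n n' _|]; first by rewrite scalerDr subrr.
split=> [a _ Ka [u [y [Xu [Yy ->]]]]|].
  exists (a *: y), (a *: u); rewrite scalerDr addrC.
  by split; [exact: prodsubZ | split; [exact: Xu|]].
by split=> a r n _; rewrite scalerA subrr.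
Qed.

Section Universal.
Variables (Q : lmodType R) (gamma : R -> M -> Q).
Hypothesis hg : balanced K C (fun x => x = 0) gamma.

Lemma balanced_comb_eq0 (s : seq (R * M)) : {in s, forall p, K p.1} ->
  X (\sum_(p <- s) p.1 *: p.2) -> \sum_(p <- s) gamma p.1 p.2 = 0.
Proof.
move=> hs Xs; have [hP hdec hrho] := hdb.
transitivity (\sum_(p <- s) \sum_(k <- ks) gamma (P k) (ka k p.1 *: p.2)).
  apply: eq_big_seq => p ps; rewrite {1}(hdec _ (hs p ps)) big_seq (balanced_suml hK.1 hg).
    rewrite [RHS]big_seq; apply: eq_bigr => k ksk; exact: (balancedMr hg _ _ (hP k ksk)).
  by move=> k ksk; apply: hK.2; exact: hP.
rewrite exchange_big /= big_seq; apply: big1 => k ksk; have Kk := hP k ksk.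
rewrite -(balanced_sumr hg) //; apply: (balanced_eq0 hg Kk).
apply: sum_subl hY _ => a Ka; have [rho hr] := hrho k ksk a Ka.
rewrite scaler_sumr (eq_big_seq (fun p => rho *: (p.1 *: p.2))).
  by rewrite -scaler_sumr; exact: (submodZ hX).
by move=> p ps; rewrite scalerA hr ?scalerA //; exact: hs.
Qed.

Definition represents (x : M) (s : seq (R * M)) :=
  {in s, forall p, K p.1} /\ X (x - \sum_(p <- s) p.1 *: p.2).

Lemma represents_exists x : A x -> exists s, represents x s.
Proof.
move=> [_ [v [/(prodsub_lincomb hK.1) [s [hs ->]] [Xv ->]]]].
by exists s; split=> [p /hs [] //|]; rewrite addrC addKr.
Qed.

Lemma represents_unique x s s' : represents x s -> represents x s' ->
  \sum_(p <- s) gamma p.1 p.2 = \sum_(p <- s') gamma p.1 p.2.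
Proof.
move=> [hs Xs] [hs' Xs']; apply/eqP; rewrite -subr_eq0; apply/eqP.
have := @balanced_comb_eq0 (s ++ [seq (- p.1, p.2) | p <- s']).
rewrite !big_cat !big_map /= (eq_bigr _ (fun p _ => scaleNr p.1 p.2)).
rewrite (eq_big_seq _ (fun p ps => balancedNl hK.1 hg _ (hs' p ps))) !sumrN; apply.
  move=> p; rewrite mem_cat => /orP[/hs //|/mapP[q qs ->]].
  exact: (submodN hK.1 (hs' q qs)).
have e (a b c : M) : a - b - (a - c) = c - b by rewrite opprB addrC addrA subrK.
by move: (submodB hX Xs' Xs); rewrite e.
Qed.

Definition induced (x : M) : Q :=
  \sum_(p <- xget [::] (represents x)) gamma p.1 p.2.

Lemma inducedE x s : represents x s -> induced x = \sum_(p <- s) gamma p.1 p.2.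
Proof. by move=> rs; exact: (represents_unique (xgetPex [::] (ex_intro _ s rs)) rs). Qed.

Lemma induced_lin_sq : lin_sq A B induced.
Proof.
split=> [r x y /represents_exists [s rs] /represents_exists [s' rs']|].
  pose s'' := [seq (r * p.1, p.2) | p <- s] ++ s'.
  rewrite (inducedE rs) (inducedE rs') (@inducedE _ s'').
    rewrite big_cat big_map scaler_sumr; congr (_ + _).
    by apply: eq_big_seq => p ps; rewrite (balancedMl hg) //; exact: rs.1.
  split=> [p|].
    rewrite mem_cat => /orP[/mapP[q qs ->]|/rs'.1 //].
    exact: (submodZ hK.1 _ (rs.1 q qs)).
  rewrite big_cat big_map (eq_bigr (fun p => r *: (p.1 *: p.2))) => [|p _]; last first.
    by rewrite scalerA.
  rewrite -scaler_sumr opprD addrACA -scalerBr; exact: hX.2 _ _ _ rs.2 rs'.2.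
move=> _ [u [v [/(prodsub_lincomb hK.1) [s [hs ->]] [Xv ->]]]].
rewrite (@inducedE _ s); last by split=> [p /hs [] //|]; rewrite addrC addKr.
apply: big1_seq => p ps; have [Kp Yp] := hs p ps.
by apply: (balanced_eq0 hg Kp); exact: (sum_subr (colon_submod hK hX) Yp).
Qed.

Lemma induced_scale a n : K a -> induced (a *: n) = gamma a n.
Proof.
move=> Ka; rewrite (@inducedE _ [:: (a, n)]) ?big_seq1 //.
split=> [p|]; first by rewrite inE => /eqP ->.
by rewrite big_seq1 subrr; exact: submod0.
Qed.

Lemma induced_unique g : lin_sq A B g -> (forall a n, K a -> g (a *: n) = gamma a n) ->
  forall x, A x -> g x = induced x.
Proof.
move=> [glin g0] gscale x Ax; have [s [hs Xs]] := represents_exists Ax.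
have gD u v : A u -> A v -> g (u + v) = g u + g v.
  by move=> Au Av; have := glin 1 u v Au Av; rewrite !scale1r.
have [As gs] : A (\sum_(p <- s) p.1 *: p.2) /\
    g (\sum_(p <- s) p.1 *: p.2) = \sum_(p <- s) gamma p.1 p.2.
  elim: s {Xs} hs => [|q s IH] hs.
    by rewrite !big_nil; split; [exact: submod0 | apply: g0; exact: submod0].
  have Kq : K q.1 by apply: hs; exact: mem_head.
  have Aq : A (q.1 *: q.2) by apply: sum_subl hX _; exact: prodsubZ.
  have [As gs] := IH (fun p ps => hs p (predU1r _ _ ps)).
  by rewrite !big_cons gD // gs gscale //; split=> //; exact: (submodD hA Aq As).
have AXs : A (x - \sum_(p <- s) p.1 *: p.2) by exact: (sum_subr (prodsub_submod _ _) Xs).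
rewrite (inducedE (conj hs Xs)) -[x in g x](subrK (\sum_(p <- s) p.1 *: p.2)) gD //.
by rewrite gs g0 ?add0r //; exact: (sum_subr (prodsub_submod _ _) Xs).
Qed.

End Universal.

Theorem is_tensor_scale : is_tensor K C A B (fun a n => a *: n).
Proof.
split; first exact: sum_sub_submod (colon_submod hK hX) hY.
split; first exact: hA.
split; first exact: hB.
split=> [x [u [v [KYu [Xv ->]]]]|]; first by exists u, v; split=> //; exact: prodsubS KYu.
split=> [a n Ka|]; first by apply: sum_subl hX _; exact: prodsubZ.
split; first exact: scale_balanced.
move=> Q gamma hg; exists (induced gamma); split; first exact: induced_lin_sq.
by split; [exact: induced_scale | exact: induced_unique].
Qed.

End ScaleTensor.

Lemma powMS (R : pzRingType) (M : lmodType R) (I : R -> Prop) j : ideal I ->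
  @powM R M I j.+1 = prodsub (ipow I j) (@powM R M I 1).
Proof.
by move=> hI; rewrite /powM ipowSr // ipow1 // prodsubA //; exact: (ipow_ideal I j).2.
Qed.

Theorem proposition3p1 (R : pzRingType) (M : lmodType R) (I : R -> Prop)
  (X : M -> Prop) (j : nat) :
  left_arithmetical R ->
  fin_gen M -> projective M ->
  invertible_ideal I -> subset_of I (jacobson (R:=R)) ->
  fin_colength_subs_projective I M ->
  submod X ->
  (* I^j(M/X) / I^(j+1)(M/X) = (I^j M + X)/(I^(j+1) M + X)
       ≅ I^j ⊗_R ((M/IM)/Y_j) = I^j ⊗_R (M/((M ∩ I^-j X) + IM)) *)
  exists beta : R -> M -> M,
    is_tensor (ipow I j) (sum_sub (colon_pow I j X) (@powM R M I 1%N))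
      (sum_sub (@powM R M I j) X) (sum_sub (@powM R M I j.+1) X) beta.
Proof.
move=> _ _ _ hinv _ _ hX.
have [T [ks [P [ka hdb]]]] := ipow_dual_basis j hinv.
rewrite (powMS M j hinv.1).
exists (fun a n => a *: n).
exact: (is_tensor_scale (ipow_ideal I j) hdb hX (prodsub_submod _ _)).
Qed.
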